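(* Let $B$ be a $\mathbb{Z}$-graded integral domain containing a field $k$. If $B$ has a cylindrical element, then there exists a field $K$ with $k\subseteq K\subseteq \operatorname{Frac}(B)$ such that $\operatorname{Frac}(B)$ is a purely transcendental extension of $K$ of transcendence degree $2$.
   Context: For a nonzero homogeneous $f\in B$, $B_{(f)}$ denotes the degree-$0$ subring of the graded ring $B_f=S^{-1}B$, $S=\{1,f,f^2,\dots\}$. A ring $C$ is a polynomial ring in one variable if there is a subring $A\subseteq C$ such that $C$ is a polynomial ring in one variable over $A$ (the zero ring counts). An element $f$ of a $\mathbb{Z}$-graded domain $B$ is cylindrical if it is nonzero, homogeneous of nonzero degree, and $B_{(f)}$ is a polynomial ring in one variable. *)

From HB Require Import structures.
From mathcomp Require Import all_boot all_order all_algebra fraction.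
Set Implicit Arguments. Unset Strict Implicit. Unset Printing Implicit Defensive.
Import Order.TTheory GRing.Theory Num.Theory.
Local Open Scope ring_scope.

Definition subring_set (R : comPzRingType) (S : R -> Prop) : Prop :=
  [/\ S 1, (forall x y, S x -> S y -> S (x - y)) &
           (forall x y, S x -> S y -> S (x * y))].

Definition subfield_set (R : comUnitRingType) (S : R -> Prop) : Prop :=
  subring_set S /\
  (forall x, S x -> x != 0 -> x \is a GRing.unit /\ S x^-1).

Definition is_Zgrading (B : idomainType) (Bd : int -> B -> Prop) : Prop :=
  [/\ (forall n : int, Bd n 0 /\ (forall x y, Bd n x -> Bd n y -> Bd n (x - y))),
      (forall (m n : int) (x y : B), Bd m x -> Bd n y -> Bd (m + n) (x * y)),
      (forall b : B, exists (s : seq int) (c : int -> B),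
          [/\ uniq s, (forall n, Bd n (c n)) & b = \sum_(n <- s) c n]) &
      (forall (s : seq int) (c : int -> B),
          uniq s -> (forall n, Bd n (c n)) -> \sum_(n <- s) c n = 0 ->
          forall n, n \in s -> c n = 0)].

Notation Frac B := {fraction B}.
Notation frac_of := (@FracField.tofrac _).

(* B_(f), realized inside Frac(B) (B_f embeds in Frac(B) as B is a domain):
   the degree-0 elements of B_f, i.e. the b / f^n with b homogeneous of the
   same degree as f^n. *)
Definition deg0_loc (B : idomainType) (Bd : int -> B -> Prop) (f : B)
  : Frac B -> Prop :=
  fun z => exists (n : nat) (b : B) (e : int),
       [/\ Bd e b, Bd e (f ^+ n) & z = frac_of b / (frac_of f) ^+ n].

Definition is_poly_ring_1 (F : fieldType) (C : F -> Prop) : Prop :=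
  exists (A : F -> Prop) (t : F),
    [/\ subring_set A, (forall a, A a -> C a), C t,
        (forall c, C c <-> exists p : {poly F}, (forall i, A p`_i) /\ c = p.[t]) &
        (forall p : {poly F}, (forall i, A p`_i) -> p.[t] = 0 -> p = 0)].

Definition cylindrical (B : idomainType) (Bd : int -> B -> Prop) (f : B) : Prop :=
  [/\ f != 0, (exists d : int, d != 0 /\ Bd d f) & is_poly_ring_1 (deg0_loc Bd f)].

(* evaluation of a bivariate polynomial P (outer variable Y, coefficients
   polynomials in X) at (X, Y) = (x, y) *)
Definition eval2 (F : fieldType) (P : {poly {poly F}}) (x y : F) : F :=
  (P.[y%:P]).[x].

Definition coefs_in (F : fieldType) (K : F -> Prop) (P : {poly {poly F}}) : Prop :=
  forall i j : nat, K P`_i`_j.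

Definition purely_transc_deg2 (F : fieldType) (K : F -> Prop) : Prop :=
  exists x y : F,
    (forall P, coefs_in K P -> eval2 P x y = 0 -> P = 0) /\
    (forall z : F, exists P Q, [/\ coefs_in K P, coefs_in K Q,
                                  eval2 Q x y != 0 & z = eval2 P x y / eval2 Q x y]).

(* Let [f] be cylindrical of degree [d != 0] with [B_(f) = A[t]], and let [K] be
   the fraction field of [A] inside [Frac B].  Take a nonzero homogeneous fraction
   [g] of least positive degree [e].  Every homogeneous fraction is then a degree-0
   fraction times a power of [g], and a degree-0 fraction is a quotient of two
   elements of [B_(f)] (clear denominators with a power of [f]); as [B] is spanned
   by homogeneous elements, [Frac B = K(t, g)].  In a relation
   [\sum_i P_i(t) g^i = 0] the terms have the pairwise distinct degrees [i * e],
   so they vanish, and [t] is transcendental over [K] because it is over [A].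
   Finally [k] lies in [K]: units of a graded domain are homogeneous, so [k] sits
   in degree 0, hence in [A[t]], whose units lie in [A]. *)

From HB Require Import structures.
From mathcomp Require Import all_boot all_order all_algebra fraction generic_quotient.
From mathcomp Require Import zify ring.
From Stdlib Require Import ClassicalEpsilon.
Set Implicit Arguments. Unset Strict Implicit. Unset Printing Implicit Defensive.
Import Order.TTheory GRing.Theory Num.Theory.
Local Open Scope ring_scope.

Lemma big_extend_support (R : nmodType) (I : eqType) (s S : seq I) (F : I -> R) :
  uniq s -> uniq S -> {subset s <= S} ->
  \sum_(i <- S) (if i \in s then F i else 0) = \sum_(i <- s) F i.
Proof.
move=> us uS sS; rewrite -big_mkcond /= -big_filter.
apply/perm_big/uniq_perm; rewrite ?filter_uniq // => i.
by rewrite mem_filter andb_idr //; apply: sS.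
Qed.

Lemma ex_minimal (P : nat -> Prop) :
  (exists n, P n) -> exists n, P n /\ forall m, P m -> (n <= m)%N.
Proof.
move=> [n Pn]; elim/ltn_ind: n Pn => n IH Pn.
have [[m [ltmn Pm]]|nosmaller] := classic (exists m, (m < n)%N /\ P m).
  exact: IH ltmn Pm.
exists n; split => // m Pm; rewrite leqNgt; apply/negP => ltmn.
by apply: nosmaller; exists m.
Qed.

Lemma seq_argmax (d : Order.disp_t) (T : orderType d) (I : eqType) (f : I -> T) (s : seq I) :
  s != [::] -> exists2 i, i \in s & forall j, j \in s -> (f j <= f i)%O.
Proof.
elim: s => // a s IH _; have [->|/IH[i si imax]] := eqVneq s [::].
  by exists a => [|j]; rewrite ?mem_seq1 // => /eqP->.
have [le|lt] := leP (f a) (f i).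
  by exists i => [|j]; rewrite inE ?si ?orbT // => /orP[/eqP->|/imax].
exists a => [|j]; first exact: mem_head.
by rewrite inE => /orP[/eqP->//|/imax/le_trans]; apply; apply: ltW.
Qed.

Section Subring.
Variables (R : comPzRingType) (S : R -> Prop).
Hypothesis subS : subring_set S.

Lemma subring1 : S 1. Proof. by case: subS. Qed.
Lemma subringB x y : S x -> S y -> S (x - y). Proof. by case: subS => _ + _; apply. Qed.
Lemma subringM x y : S x -> S y -> S (x * y). Proof. by case: subS => _ _; apply. Qed.
Lemma subring0 : S 0. Proof. by rewrite -(subrr 1); apply: subringB; apply: subring1. Qed.
Lemma subringN x : S x -> S (- x).
Proof. by move=> Sx; rewrite -sub0r; apply: subringB => //; apply: subring0. Qed.
Lemma subringD x y : S x -> S y -> S (x + y).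
Proof. by move=> Sx Sy; rewrite -[y]opprK; apply: subringB => //; apply: subringN. Qed.

Lemma subring_sum (I : Type) (r : seq I) (P : pred I) (G : I -> R) :
  (forall i, P i -> S (G i)) -> S (\sum_(i <- r | P i) G i).
Proof. by move=> SG; apply: big_ind => //; [apply: subring0 | apply: subringD]. Qed.

Lemma subring_bool (b : bool) : S b%:R.
Proof. by case: b; [apply: subring1 | apply: subring0]. Qed.

End Subring.

Section PolyOver.
Variables (R : comNzRingType) (S : R -> Prop).
Hypothesis subS : subring_set S.

Definition poly_over (p : {poly R}) := forall i, S p`_i.

Lemma poly_over_subring : subring_set poly_over.
Proof.
split=> [i|p q Sp Sq i|p q Sp Sq i].
- by rewrite coef1; apply: (subring_bool subS).
- by rewrite coefB; apply: (subringB subS).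
- by rewrite coefM; apply: (subring_sum subS) => j _; apply: (subringM subS).
Qed.

Lemma poly_overC c : S c -> poly_over c%:P.
Proof. by move=> Sc i; rewrite coefC; case: eqP => // _; apply: (subring0 subS). Qed.

Lemma poly_overX : poly_over 'X.
Proof. by move=> i; rewrite coefX; apply: (subring_bool subS). Qed.

End PolyOver.

Section Grading.
Variables (B : idomainType) (Bd : int -> B -> Prop).
Hypothesis gradB : is_Zgrading Bd.

Lemma grade0 n : Bd n 0. Proof. by case: gradB => /(_ n)[] + _ _ _ _. Qed.
Lemma gradeB n x y : Bd n x -> Bd n y -> Bd n (x - y).
Proof. by case: gradB => /(_ n)[_ + _ _ _]; apply. Qed.
Lemma gradeN n x : Bd n x -> Bd n (- x).
Proof. by move=> hx; rewrite -sub0r; apply: gradeB => //; apply: grade0. Qed.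
Lemma gradeD n x y : Bd n x -> Bd n y -> Bd n (x + y).
Proof. by move=> hx hy; rewrite -[y]opprK; apply: gradeB => //; apply: gradeN. Qed.
Lemma gradeM m n x y : Bd m x -> Bd n y -> Bd (m + n) (x * y).
Proof. by case: gradB => _ + _ _; apply. Qed.

Lemma grade_sum n (I : Type) (r : seq I) (P : pred I) (F : I -> B) :
  (forall i, P i -> Bd n (F i)) -> Bd n (\sum_(i <- r | P i) F i).
Proof. by move=> hF; apply: big_ind => //; [apply: grade0 | apply: gradeD]. Qed.

Lemma exists_hdecomp b : exists sc : seq int * (int -> B),
  [/\ uniq sc.1, forall n, Bd n (sc.2 n) & b = \sum_(n <- sc.1) sc.2 n].
Proof. by case: gradB => _ _ /(_ b)[s [c]]; exists (s, c). Qed.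

Definition hdecomp b := proj1_sig (constructive_indefinite_description _ (exists_hdecomp b)).

Definition hcomp b n := if n \in (hdecomp b).1 then (hdecomp b).2 n else 0.

Lemma hdecompP b : [/\ uniq (hdecomp b).1, forall n, Bd n ((hdecomp b).2 n) &
   b = \sum_(n <- (hdecomp b).1) (hdecomp b).2 n].
Proof. exact: (proj2_sig (constructive_indefinite_description _ (exists_hdecomp b))). Qed.

Lemma hdecomp_uniq b : uniq (hdecomp b).1. Proof. by case: (hdecompP b). Qed.

Lemma hcomp_hom b n : Bd n (hcomp b n).
Proof. by rewrite /hcomp; case: ifP => _; [case: (hdecompP b) | apply: grade0]. Qed.

Lemma hcomp_notin b n : n \notin (hdecomp b).1 -> hcomp b n = 0.
Proof. by rewrite /hcomp => /negPf ->. Qed.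

Lemma hcomp_supp b n : hcomp b n != 0 -> n \in (hdecomp b).1.
Proof. by apply: contraR => /hcomp_notin ->. Qed.

Lemma hcomp_sum_over b (S : seq int) :
  uniq S -> {subset (hdecomp b).1 <= S} -> \sum_(n <- S) hcomp b n = b.
Proof.
by move=> uS bS; rewrite big_extend_support ?hdecomp_uniq //; case: (hdecompP b).
Qed.

Lemma hcomp_sum b : \sum_(n <- (hdecomp b).1) hcomp b n = b.
Proof. exact: hcomp_sum_over (hdecomp_uniq b) _. Qed.

(* The last axiom of a grading, applied to the difference of two decompositions
   over the union of their supports. *)
Lemma hcompE b (s : seq int) (c : int -> B) :
  uniq s -> (forall n, Bd n (c n)) -> b = \sum_(n <- s) c n ->
  forall n, hcomp b n = if n \in s then c n else 0.
Proof.
move=> us hc eb n.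
pose S := undup (s ++ (hdecomp b).1).
have uS : uniq S := undup_uniq _.
have sS : {subset s <= S} by move=> m ms; rewrite mem_undup mem_cat ms.
have bS : {subset (hdecomp b).1 <= S} by move=> m mb; rewrite mem_undup mem_cat mb orbT.
pose c' m := (if m \in s then c m else 0) - hcomp b m.
have c'0 : forall m, m \in S -> c' m = 0.
  case: gradB => _ _ _ /(_ S c'); apply => // [m|].
  - apply: gradeB; last exact: hcomp_hom.
    by case: ifP => _; [apply: hc | apply: grade0].
  - by rewrite sumrB big_extend_support // hcomp_sum_over // -eb subrr.
have [nS|nS] := boolP (n \in S); first by apply/esym/eqP; rewrite -subr_eq0; apply/eqP/c'0.
rewrite ifF ?hcomp_notin //; last exact/negbTE/(contra (sS n)).
exact: contra (bS n) nS.
Qed.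

Lemma hcomp_homog m x : Bd m x -> forall n, hcomp x n = if n == m then x else 0.
Proof.
move=> hx n; rewrite (@hcompE x [:: m] (fun n => if n == m then x else 0)) //.
- by rewrite mem_seq1; case: eqP.
- by move=> j; case: eqP => [->|_] //; apply: grade0.
- by rewrite big_seq1 eqxx.
Qed.

Lemma hcomp_homog_supp m x n : Bd m x -> hcomp x n != 0 -> n = m.
Proof. by move/hcomp_homog->; case: ifP => [/eqP //|_ /eqP]. Qed.

Lemma hcomp0 n : hcomp 0 n = 0.
Proof. by rewrite (@hcomp_homog 0) ?if_same //; apply: grade0. Qed.

Lemma hcompD x y n : hcomp (x + y) n = hcomp x n + hcomp y n.
Proof.
pose S := undup ((hdecomp x).1 ++ (hdecomp y).1).
have xS : {subset (hdecomp x).1 <= S} by move=> m mx; rewrite mem_undup mem_cat mx.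
have yS : {subset (hdecomp y).1 <= S} by move=> m my; rewrite mem_undup mem_cat my orbT.
rewrite (@hcompE (x + y) S (fun n => hcomp x n + hcomp y n)) ?undup_uniq //.
- case: ifP => // /negbT nS.
  by rewrite !hcomp_notin ?addr0 //; apply: contra nS; [apply: yS | apply: xS].
- by move=> j; apply: gradeD; apply: hcomp_hom.
- by rewrite big_split /= !hcomp_sum_over ?undup_uniq.
Qed.

Lemma hcomp_big (I : Type) (r : seq I) (P : pred I) (F : I -> B) n :
  hcomp (\sum_(i <- r | P i) F i) n = \sum_(i <- r | P i) hcomp (F i) n.
Proof. by apply: (big_morph (hcomp^~ n)) => [x y|]; [apply: hcompD | apply: hcomp0]. Qed.

Lemma homog_indep k (a : 'I_k -> B) (m : 'I_k -> int) :
  (forall i, Bd (m i) (a i)) -> injective m -> \sum_i a i = 0 -> forall j, a j = 0.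
Proof.
move=> ha m_inj sum0 j.
have := congr1 (hcomp^~ (m j)) sum0; rewrite /= hcomp0 hcomp_big.
rewrite (eq_bigr (fun i => if i == j then a j else 0)) -?big_mkcond ?big_pred1_eq //.
move=> i _; rewrite (hcomp_homog (ha i)).
by have [->|nij] := eqVneq i j; rewrite ?eqxx // (inj_eq m_inj) eq_sym (negPf nij).
Qed.

Lemma homog_supp m b : (forall n, hcomp b n != 0 -> n = m) -> Bd m b.
Proof.
move=> supp; rewrite -(hcomp_sum b); apply: grade_sum => n _.
by have [->|/supp <-] := eqVneq (hcomp b n) 0; [apply: grade0 | apply: hcomp_hom].
Qed.

Lemma grade0_1 : (exists m x, x != 0 /\ Bd m x) -> Bd 0 1.
Proof.
case=> m [x [x0 hx]].
have shiftK j : m + j - m = j by rewrite addrC addKr.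
pose s := [seq m + j | j <- (hdecomp 1).1]; pose c j := x * hcomp 1 (j - m).
have us : uniq s by rewrite map_inj_uniq ?hdecomp_uniq //; apply: addrI.
have hc j : Bd j (c j) by have := gradeM hx (hcomp_hom 1 (j - m)); rewrite addrC subrK.
have xE : x = \sum_(j <- s) c j.
  by rewrite big_map /c; under eq_bigr do rewrite shiftK; rewrite -mulr_sumr hcomp_sum mulr1.
apply: homog_supp => n n1.
have := hcompE us hc xE (m + n); rewrite (mem_map (addrI m)) hcomp_supp // /c shiftK.
move=> xn; have : hcomp x (m + n) != 0 by rewrite xn mulf_neq0.
by move/(hcomp_homog_supp hx)/eqP; rewrite -subr_eq0 shiftK => /eqP.
Qed.

Lemma hcompM x y n : hcomp (x * y) n =
  \sum_(i <- (hdecomp x).1) \sum_(j <- (hdecomp y).1)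
     (if n == i + j then hcomp x i * hcomp y j else 0).
Proof.
rewrite -{1}(hcomp_sum x) -{1}(hcomp_sum y) mulr_suml hcomp_big; apply: eq_bigr => i _.
rewrite mulr_sumr hcomp_big; apply: eq_bigr => j _.
by rewrite (hcomp_homog (gradeM (hcomp_hom x i) (hcomp_hom y j))).
Qed.

(* [T] is the highest degree of a component of [b] for [sg = 1], the lowest one
   for [sg = -1]. *)
Definition extremal (sg : int) b T :=
  hcomp b T != 0 /\ forall n, hcomp b n != 0 -> sg * n <= sg * T.

Lemma extremal_exists sg b : b != 0 -> exists T, extremal sg b T.
Proof.
move=> b0; pose L := [seq n <- (hdecomp b).1 | hcomp b n != 0].
have L0 : L != [::].
  apply: contraNneq b0 => L0; rewrite -(hcomp_sum b) big1_seq // => n /= nb.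
  apply/eqP; apply: contraTT isT => bn.
  have : n \in L by rewrite mem_filter bn nb.
  by rewrite L0.
have [T] := seq_argmax (fun n => sg * n) L0; rewrite mem_filter => /andP[bT _] Tmax.
by exists T; split=> // n bn; apply: Tmax; rewrite mem_filter bn hcomp_supp.
Qed.

Lemma hcompM_extremal sg x y Tx Ty : sg != 0 ->
  extremal sg x Tx -> extremal sg y Ty ->
  hcomp (x * y) (Tx + Ty) = hcomp x Tx * hcomp y Ty.
Proof.
move=> sg0 [xT xmax] [yT ymax].
have term0 i j : (i != Tx) || (j != Ty) ->
    (if Tx + Ty == i + j then hcomp x i * hcomp y j else 0) = 0.
  move=> neq; case: eqP => // eTij.
  have [->|xi] := eqVneq (hcomp x i) 0; first by rewrite mul0r.
  have [->|yj] := eqVneq (hcomp y j) 0; first by rewrite mulr0.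
  have := xmax i xi; have := ymax j yj.
  have : sg * Tx + sg * Ty = sg * i + sg * j by rewrite -!mulrDr eTij.
  move=> esum lej lei; have ei : sg * i = sg * Tx by lia.
  have ej : sg * j = sg * Ty by lia.
  by move: neq; rewrite (mulfI sg0 ei) (mulfI sg0 ej) !eqxx.
rewrite hcompM (bigD1_seq Tx) ?hcomp_supp ?hdecomp_uniq //=.
rewrite (bigD1_seq Ty) ?hcomp_supp ?hdecomp_uniq //= eqxx.
rewrite big1 => [|j jT]; last by apply: term0; rewrite jT orbT.
by rewrite addr0 big1 ?addr0 // => i iT; apply: big1 => j _; apply: term0; rewrite iT.
Qed.

Section GradedOne.
Hypothesis grade1 : Bd 0 1.

Lemma gradeX m x n : Bd m x -> Bd (m *+ n) (x ^+ n).
Proof.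
move=> hx; elim: n => [|n IH]; first by rewrite expr0 mulr0n.
by rewrite exprS mulrS; apply: gradeM.
Qed.

Lemma extremal_unit sg u v Tu Tv : sg != 0 -> u * v = 1 ->
  extremal sg u Tu -> extremal sg v Tv -> Tu + Tv = 0.
Proof.
move=> sg0 uv eu ev; have := hcompM_extremal sg0 eu ev.
rewrite uv (hcomp_homog grade1); case: eqP => // _ /esym/eqP.
by rewrite mulf_eq0 (negPf eu.1) (negPf ev.1).
Qed.

(* The highest degrees of [u] and [v] add up to 0, and so do the lowest ones. *)
Lemma unit_homog u v : u * v = 1 -> exists m, Bd m u.
Proof.
move=> uv; have [u0 v0] : u != 0 /\ v != 0.
  by split; apply: contra_eq_neq uv => ->; rewrite ?mul0r ?mulr0 eq_sym oner_neq0.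
have [Tu eTu] := extremal_exists 1 u0; have [Su eSu] := extremal_exists (-1) u0.
have [Tv eTv] := extremal_exists 1 v0; have [Sv eSv] := extremal_exists (-1) v0.
have sumT := extremal_unit (oner_neq0 _) uv eTu eTv.
have sumS := extremal_unit (isT : (-1 : int) != 0) uv eSu eSv.
have := eTu.2 _ eSu.1; have := eTv.2 _ eSv.1.
exists Tu; apply: homog_supp => n un.
have := eTu.2 _ un; have := eSu.2 _ un; lia.
Qed.

(* Units are homogeneous, and [1 + a] has nonzero components in degrees 0 and
   [deg a]. *)
Lemma subfield_grade0 (k : B -> Prop) : subfield_set k -> forall a, k a -> Bd 0 a.
Proof.
move=> [subk kinv] a ka.
have k_homog x : k x -> x != 0 -> exists m, Bd m x.
  by move=> kx x0; have [xu _] := kinv x kx x0; apply: (unit_homog (mulrV xu)).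
have [->|a0] := eqVneq a 0; first exact: grade0.
have [m am] := k_homog a ka a0.
have [<-//|m0] := eqVneq m 0.
have k1a : k (1 + a) by apply: (subringD subk) => //; apply: (subring1 subk).
have [a1|a1] := eqVneq (1 + a) 0.
  have -> : a = -1 by apply/eqP; rewrite -addr_eq0 addrC a1.
  exact: gradeN grade1.
have [m' am'] := k_homog _ k1a a1.
have hcomp1a n : hcomp (1 + a) n = (n == 0)%:R + (if n == m then a else 0).
  by rewrite hcompD (hcomp_homog grade1) (hcomp_homog am); case: eqP.
have deg0 : 0 = m'.
  by apply: (hcomp_homog_supp am'); rewrite hcomp1a eqxx (eq_sym 0) (negPf m0) addr0 oner_neq0.
have degm : m = m'.
  by apply: (hcomp_homog_supp am'); rewrite hcomp1a eqxx (negPf m0) add0r a0.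
by move: m0; rewrite degm -deg0 eqxx.
Qed.

End GradedOne.

End Grading.

Section HomogeneousFractions.
Variables (B : idomainType) (Bd : int -> B -> Prop).
Hypotheses (gradB : is_Zgrading Bd) (grade1 : Bd 0 1).

Definition homfrac m (z : Frac B) := exists a b e1 e2,
  [/\ Bd e1 a, Bd e2 b, b != 0, m = e1 - e2 & z = frac_of a / frac_of b].

Lemma homfrac_tofrac m a : Bd m a -> homfrac m (frac_of a).
Proof.
by move=> ha; exists a, 1, m, 0; rewrite ?oner_neq0 ?subr0 ?rmorph1 ?divr1.
Qed.

Lemma homfrac0 m : homfrac m 0.
Proof. by rewrite -(rmorph0 frac_of); apply/homfrac_tofrac/(grade0 gradB). Qed.

Lemma homfrac1 : homfrac 0 1.
Proof. by rewrite -(rmorph1 frac_of); apply: homfrac_tofrac. Qed.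

Lemma homfracM m n z w : homfrac m z -> homfrac n w -> homfrac (m + n) (z * w).
Proof.
move=> [a [b [e1 [e2 [ha hb b0 -> ->]]]]] [a' [b' [e1' [e2' [ha' hb' b0' -> ->]]]]].
exists (a * a'), (b * b'), (e1 + e1'), (e2 + e2'); split; try exact: (gradeM gradB).
- by rewrite mulf_neq0.
- by rewrite addrACA opprD.
- by rewrite !rmorphM mulf_div.
Qed.

Lemma homfracV m z : homfrac m z -> homfrac (- m) z^-1.
Proof.
move=> [a [b [e1 [e2 [ha hb b0 -> ->]]]]].
have [->|a0] := eqVneq a 0; first by rewrite rmorph0 mul0r invr0; apply: homfrac0.
by exists b, a, e2, e1; rewrite opprB invf_div.
Qed.

Lemma homfracD m z w : homfrac m z -> homfrac m w -> homfrac m (z + w).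
Proof.
move=> [a [b [e1 [e2 [ha hb b0 em ->]]]]] [a' [b' [e1' [e2' [ha' hb' b0' em' ->]]]]].
exists (a * b' + a' * b), (b * b'), (e1 + e2'), (e2 + e2'); split.
- apply: (gradeD gradB); first exact: (gradeM gradB).
  have -> : e1 + e2' = e1' + e2 by lia.
  exact: (gradeM gradB).
- exact: (gradeM gradB).
- by rewrite mulf_neq0.
- by rewrite em; ring.
- by rewrite addf_div ?tofrac_eq0 // !rmorphD !rmorphM.
Qed.

Lemma homfracX m z n : homfrac m z -> homfrac (m *+ n) (z ^+ n).
Proof.
move=> hz; elim: n => [|n IH]; first by rewrite expr0 mulr0n; apply: homfrac1.
by rewrite exprS mulrS; apply: homfracM.
Qed.

Lemma homfrac_sum m (I : Type) (r : seq I) (P : pred I) (G : I -> Frac B) :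
  (forall i, P i -> homfrac m (G i)) -> homfrac m (\sum_(i <- r | P i) G i).
Proof. by move=> hG; apply: big_ind => //; [apply: homfrac0 | apply: homfracD]. Qed.

Lemma homfrac_expz m z (q : int) : homfrac m z -> homfrac (m * q) (z ^ q).
Proof.
move=> hz; have mulz (n : nat) : m * n%:Z = m *+ n by rewrite -mulr_natr natz.
case: q => n; first by rewrite -exprnP mulz; apply: homfracX.
by rewrite NegzE -exprnN mulrN mulz; apply/homfracV/homfracX.
Qed.

Lemma homfrac_common_denom n (z : nat -> Frac B) (m : nat -> int) :
  (forall i, (i < n)%N -> homfrac (m i) (z i)) ->
  exists b e (a : nat -> B), [/\ b != 0, Bd e b &
     forall i, (i < n)%N -> Bd (m i + e) (a i) /\ z i = frac_of (a i) / frac_of b].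
Proof.
elim: n => [|n IH] hz.
  by exists 1, 0, (fun _ => 0); split; rewrite ?oner_neq0.
have [i lt_in|b [e [a [b0 hb ha]]]] := IH; first by apply/hz/ltnW.
have [a' [b' [e1 [e2 [ha' hb' b0' em ez]]]]] := hz n (ltnSn n).
exists (b * b'), (e + e2), (fun i => if (i < n)%N then a i * b' else a' * b).
split; [by rewrite mulf_neq0 | exact: (gradeM gradB) |].
move=> i; rewrite ltnS leq_eqVlt => /orP[/eqP ->|lt_in].
  rewrite ltnn; split.
    have -> : m n + (e + e2) = e1 + e by rewrite em; ring.
    exact: (gradeM gradB).
  by rewrite ez !rmorphM [frac_of b * _]mulrC -mulf_div divff ?mulr1 // tofrac_eq0.
rewrite lt_in; have [hai ->] := ha i lt_in; split.
  by rewrite addrA; apply: (gradeM gradB).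
by rewrite !rmorphM -mulf_div divff ?mulr1 // tofrac_eq0.
Qed.

(* Over a common homogeneous denominator this is the directness of the grading. *)
Lemma homfrac_indep k (z : nat -> Frac B) (m : nat -> int) :
  (forall i, (i < k)%N -> homfrac (m i) (z i)) ->
  {in gtn k &, injective m} ->
  \sum_(i < k) z i = 0 -> forall j, (j < k)%N -> z j = 0.
Proof.
move=> hz m_inj sum0 j lt_jk.
have [b [e [a [b0 hb ha]]]] := homfrac_common_denom hz.
have sum_a : \sum_(i < k) a i = 0.
  apply/eqP; rewrite -tofrac_eq0 rmorph_sum; apply/eqP.
  transitivity (\sum_(i < k) z i * frac_of b); last by rewrite -mulr_suml sum0 mul0r.
  apply: eq_bigr => i _ /=.
  by have [_ ->] := ha i (ltn_ord i); rewrite divfK ?tofrac_eq0.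
have := homog_indep gradB (fun i : 'I_k => (ha i (ltn_ord i)).1) _ sum_a (Ordinal lt_jk).
have [_ -> /= ->] := ha j lt_jk; first by rewrite rmorph0 mul0r.
by move=> i i2 /addIr /m_inj eq_ii2; apply/val_inj/eq_ii2; rewrite inE ltn_ord.
Qed.

End HomogeneousFractions.

Section RationalExpressions.
Variables (F : fieldType) (K : F -> Prop) (x y : F).
Hypothesis fieldK : subfield_set K.

Let subK : subring_set K. Proof. by case: fieldK. Qed.

Lemma coefs_in_subring : subring_set (coefs_in K).
Proof. exact: poly_over_subring (poly_over_subring subK). Qed.

Lemma coefs_inC c : K c -> coefs_in K c%:P%:P.
Proof. by move=> Kc; apply/(poly_overC (poly_over_subring subK))/(poly_overC subK). Qed.

Lemma eval2D P Q : eval2 (P + Q) x y = eval2 P x y + eval2 Q x y.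
Proof. by rewrite /eval2 !hornerD. Qed.
Lemma eval2M P Q : eval2 (P * Q) x y = eval2 P x y * eval2 Q x y.
Proof. by rewrite /eval2 !hornerM. Qed.
Lemma eval2CC c : eval2 c%:P%:P x y = c.
Proof. by rewrite /eval2 !hornerC. Qed.
Lemma eval2C p : eval2 p%:P x y = p.[x].
Proof. by rewrite /eval2 hornerC. Qed.
Lemma eval2X : eval2 'X x y = y.
Proof. by rewrite /eval2 hornerX hornerC. Qed.

Definition rational_in (z : F) := exists P Q, [/\ coefs_in K P, coefs_in K Q,
  eval2 Q x y != 0 & z = eval2 P x y / eval2 Q x y].

Lemma rational_in_eval P : coefs_in K P -> rational_in (eval2 P x y).
Proof.
move=> KP; exists P, 1%:P%:P; split; rewrite ?eval2CC ?oner_neq0 ?divr1 //.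
exact/coefs_inC/(subring1 subK).
Qed.

Lemma rational_inK c : K c -> rational_in c.
Proof. by move=> Kc; rewrite -(eval2CC c); apply/rational_in_eval/coefs_inC. Qed.

Lemma rational_in_y : rational_in y.
Proof.
by rewrite -eval2X; apply: rational_in_eval; apply: (poly_overX (poly_over_subring subK)).
Qed.

Lemma rational_inD z w : rational_in z -> rational_in w -> rational_in (z + w).
Proof.
move=> [P [Q [KP KQ Q0 ->]]] [P' [Q' [KP' KQ' Q'0 ->]]].
exists (P * Q' + P' * Q), (Q * Q'); rewrite eval2M mulf_neq0 //.
split=> //; last by rewrite addf_div // eval2D !eval2M.
- by apply: (subringD coefs_in_subring); apply: (subringM coefs_in_subring).
- exact: (subringM coefs_in_subring).
Qed.

Lemma rational_inM z w : rational_in z -> rational_in w -> rational_in (z * w).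
Proof.
move=> [P [Q [KP KQ Q0 ->]]] [P' [Q' [KP' KQ' Q'0 ->]]].
exists (P * P'), (Q * Q'); rewrite !eval2M mulf_neq0 // mulf_div.
by split=> //; apply: (subringM coefs_in_subring).
Qed.

Lemma rational_inV z : rational_in z -> rational_in z^-1.
Proof.
move=> [P [Q [KP KQ Q0 ->]]].
have [->|P0] := eqVneq (eval2 P x y) 0.
  by rewrite mul0r invr0; apply/rational_inK/(subring0 subK).
by exists Q, P; rewrite invf_div.
Qed.

Lemma rational_in_sum (I : Type) (r : seq I) (P : pred I) (G : I -> F) :
  (forall i, P i -> rational_in (G i)) -> rational_in (\sum_(i <- r | P i) G i).
Proof.
move=> hG; apply: big_ind => //; last exact: rational_inD.
exact/rational_inK/(subring0 subK).
Qed.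

Lemma rational_in_expz z (q : int) : rational_in z -> rational_in (z ^ q).
Proof.
move=> hz; have hX (n : nat) : rational_in (z ^+ n).
  elim: n => [|n IH]; first by rewrite expr0; apply/rational_inK/(subring1 subK).
  by rewrite exprS; apply: rational_inM.
by case: q => n; rewrite ?NegzE -?exprnN -?exprnP; [apply: hX | apply/rational_inV/hX].
Qed.

End RationalExpressions.

Section FractionsOfSubring.
Variables (F : fieldType) (A : F -> Prop).
Hypothesis subA : subring_set A.

Definition fracs_of z := exists a b, [/\ A a, A b, b != 0 & z = a / b].

Definition transcendental_over t := forall p, poly_over A p -> p.[t] = 0 -> p = 0.

Lemma fracs_of_id a : A a -> fracs_of a.
Proof. by move=> Aa; exists a, 1; rewrite ?divr1 ?oner_neq0; split=> //; apply: subring1. Qed.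

Lemma fracs_subfield : subfield_set fracs_of.
Proof.
split; first split.
- exact/fracs_of_id/(subring1 subA).
- move=> _ _ [a [b [Aa Ab b0 ->]]] [a' [b' [Aa' Ab' b0' ->]]].
  exists (a * b' - a' * b), (b * b'); split; rewrite ?mulf_neq0 //.
  + by apply: (subringB subA); apply: (subringM subA).
  + exact: (subringM subA).
  + by rewrite -mulNr addf_div // mulNr.
- move=> _ _ [a [b [Aa Ab b0 ->]]] [a' [b' [Aa' Ab' b0' ->]]].
  by exists (a * a'), (b * b'); rewrite mulf_neq0 // mulf_div; split=> //; apply: (subringM subA).
- move=> _ [a [b [Aa Ab b0 ->]]] ab0; split; first by rewrite unitfE.
  exists b, a; rewrite invf_div; split=> //.
  by apply: contraNneq ab0 => ->; rewrite mul0r.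
Qed.

Lemma fracs_poly_clear p :
  poly_over fracs_of p -> exists2 D, A D /\ D != 0 & poly_over A (D *: p).
Proof.
elim/poly_ind: p => [_|p c IH Kpc].
  exists 1; first by split; [apply: subring1 | apply: oner_neq0].
  by move=> i; rewrite scaler0 coef0; apply: (subring0 subA).
have Kp : poly_over fracs_of p.
  by move=> i; have := Kpc i.+1; rewrite coefD coefMX coefC /= addr0.
have [D [AD D0] ADp] := IH Kp.
have [a [b [Aa Ab b0 ec]]] : fracs_of c by have := Kpc 0%N; rewrite coefD coefMX coefC /= add0r.
exists (D * b); first by split; [apply: (subringM subA) | rewrite mulf_neq0].
case=> [|i]; rewrite coefZ coefD coefMX coefC /=.
  by rewrite add0r ec -mulrA [b * _]mulrC divfK //; apply: (subringM subA).
by rewrite addr0 mulrAC; apply: (subringM subA) => //; have := ADp i; rewrite coefZ.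
Qed.

Variable t : F.
Hypothesis transc_t : transcendental_over t.

Lemma fracs_transcendental p : poly_over fracs_of p -> p.[t] = 0 -> p = 0.
Proof.
move=> Kp pt0; have [D [_ D0] ADp] := fracs_poly_clear Kp.
suff /eqP : D *: p = 0 by rewrite scale_poly_eq0 (negPf D0) => /eqP.
by apply: transc_t; rewrite ?hornerZ ?pt0 ?mulr0.
Qed.

(* A unit [p(t)] of [A[t]] comes from a unit [p] of [A[X]], which is constant. *)
Lemma transcendental_unit p q :
  poly_over A p -> poly_over A q -> p.[t] * q.[t] = 1 -> A p.[t].
Proof.
move=> Ap Aq pqt; have subAX := poly_over_subring subA.
have pq1 : p * q = 1.
  apply/eqP; rewrite -subr_eq0; apply/eqP/transc_t.
    by apply: (subringB subAX); [apply: (subringM subAX) | apply: (subring1 subAX)].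
  by rewrite hornerD hornerN hornerM pqt hornerC subrr.
have : p \is a GRing.unit by apply/unitrPr; exists q.
by rewrite poly_unitE => /andP[/eqP/eq_leq/size1_polyC-> _]; rewrite hornerC.
Qed.

End FractionsOfSubring.

Lemma frac_as_div (R : idomainType) (z : Frac R) :
  exists a b : R, b != 0 /\ z = frac_of a / frac_of b.
Proof.
elim/quotW: z => x; exists \n_x, \d_x; split; first exact: denom_ratioP.
have dx0 : frac_of \d_x != 0 by rewrite tofrac_eq0 denom_ratioP.
apply: (mulIf dx0); rewrite divfK //; unlock (@FracField.tofrac R).
rewrite [X in X = _]piE; apply/eqmodP; rewrite /= FracField.equivfE /FracField.mulf.
by rewrite !numden_Ratio ?mulr1 ?oner_eq0 ?mulf_neq0 ?denom_ratioP // mulrC.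
Qed.

Lemma mul_absz_diff_nat (d e : int) : d != 0 ->
  exists L M : nat, e * `|d|%N%:Z + d * L%:Z = d * M%:Z.
Proof.
case: d => n d0; have [e0|e0] := leP 0 e.
- by exists 0%N, `|e|%N; lia.
- by exists `|e|%N, 0%N; lia.
- by exists `|e|%N, 0%N; lia.
- by exists 0%N, `|e|%N; lia.
Qed.

Section Cylinder.
Variables (B : idomainType) (Bd : int -> B -> Prop) (f : B) (d : int).
Hypotheses (gradB : is_Zgrading Bd) (f0 : f != 0) (d0 : d != 0) (hfd : Bd d f).

Let grade1 : Bd 0 1. Proof. by apply: (grade0_1 gradB); exists d, f. Qed.

Lemma deg0_loc_homfrac z : deg0_loc Bd f z -> homfrac Bd 0 z.
Proof.
move=> [n [b [e [hb hfn ->]]]].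
by exists b, (f ^+ n), e, e; rewrite ?expf_neq0 ?subrr ?rmorphXn.
Qed.

Lemma tofrac_deg0_loc b : Bd 0 b -> deg0_loc Bd f (frac_of b).
Proof. by move=> hb; exists 0%N, b, 0; rewrite expr0 divr1; split=> //; apply: grade1. Qed.

(* Clearing the denominator of a homogeneous fraction [a / b] of degree 0 by
   [b ^+ (`|d| - 1) * f ^+ L] makes both terms homogeneous of degree [d * M]. *)
Lemma homfrac0_deg0_loc_div w : homfrac Bd 0 w -> exists c1 c2,
  [/\ deg0_loc Bd f c1, deg0_loc Bd f c2, c2 != 0 & w = c1 / c2].
Proof.
move=> [a [b [e1 [e [ha hb b0 e1e ->]]]]]; have {}e1e : e1 = e by lia.
subst e1.
have [L [M degLM]] := mul_absz_diff_nat e d0.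
pose u := b ^+ `|d|.-1 * f ^+ L.
have toZ (x : int) (n : nat) : x *+ n = x * n%:Z by rewrite -mulr_natr natz.
have dS : `|d|%N = `|d|.-1.+1 by rewrite prednK // absz_gt0.
have degu : Bd (e * `|d|.-1%:Z + d * L%:Z) u.
  by rewrite -!toZ; apply: (gradeM gradB); apply: (gradeX gradB grade1).
have deg_au : Bd (d *+ M) (a * u).
  by rewrite toZ -degLM dS; have := gradeM gradB ha degu; congr Bd; lia.
have deg_bu : Bd (d *+ M) (b * u).
  by rewrite toZ -degLM dS; have := gradeM gradB hb degu; congr Bd; lia.
have u0 : frac_of u != 0 by rewrite tofrac_eq0 mulf_neq0 ?expf_neq0.
have fM0 : frac_of f ^+ M != 0 by rewrite expf_neq0 ?tofrac_eq0.
exists (frac_of (a * u) / frac_of f ^+ M), (frac_of (b * u) / frac_of f ^+ M); split.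
- by exists M, (a * u), (d *+ M); split=> //; apply: (gradeX gradB grade1).
- by exists M, (b * u), (d *+ M); split=> //; apply: (gradeX gradB grade1).
- by rewrite mulf_neq0 ?invr_neq0 // rmorphM mulf_neq0 // tofrac_eq0.
- by rewrite invf_div mulrA divfK // (rmorphM _ a u) (rmorphM _ b u) -mulf_div divff // mulr1.
Qed.

Definition pos_homfrac_degree n :=
  (0 < n)%N /\ exists2 z, z != 0 & homfrac Bd n%:Z z.

Lemma pos_homfrac_degree_exists : exists n, pos_homfrac_degree n.
Proof.
have f0' : frac_of f != 0 by rewrite tofrac_eq0.
have hf := homfrac_tofrac grade1 hfd.
case: d d0 hf => n d0' hf; [exists n | exists n.+1]; split=> //; first by lia.
  by exists (frac_of f).
exists (frac_of f)^-1; first by rewrite invr_neq0.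
by have := homfracV gradB grade1 hf; rewrite NegzE opprK.
Qed.

Variables (A : Frac B -> Prop) (t : Frac B).
Hypotheses (subA : subring_set A) (A_deg0 : forall a, A a -> deg0_loc Bd f a)
  (t_deg0 : deg0_loc Bd f t)
  (deg0_polyE : forall c, deg0_loc Bd f c -> exists2 p, poly_over A p & c = p.[t])
  (transc_t : transcendental_over A t).

Let fieldK : subfield_set (fracs_of A). Proof. exact: fracs_subfield. Qed.
Let subK : subring_set (fracs_of A). Proof. by case: fieldK. Qed.

Lemma fracs_homfrac z : fracs_of A z -> homfrac Bd 0 z.
Proof.
move=> [a [b [Aa Ab b0 ->]]].
have hb := homfracV gradB grade1 (deg0_loc_homfrac (A_deg0 Ab)).
by have := homfracM gradB (deg0_loc_homfrac (A_deg0 Aa)) hb; rewrite oppr0 addr0.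
Qed.

Lemma poly_eval_homfrac p : poly_over (fracs_of A) p -> homfrac Bd 0 p.[t].
Proof.
move=> Kp; rewrite horner_coef; apply: (homfrac_sum gradB grade1) => i _.
have ti := homfracX gradB grade1 i (deg0_loc_homfrac t_deg0).
by have := homfracM gradB (fracs_homfrac (Kp i)) ti; rewrite mul0rn addr0.
Qed.

(* A nonzero [a] of [k] and its inverse have degree 0, so they are polynomials
   in [t] over [A] whose product is 1, hence constants. *)
Lemma subfield_in_fracs (k : B -> Prop) :
  subfield_set k -> forall a, k a -> fracs_of A (frac_of a).
Proof.
move=> fieldk a ka.
have [->|a0] := eqVneq a 0; first by rewrite rmorph0; apply/(fracs_of_id subA)/(subring0 subA).
have [au kai] := fieldk.2 a ka a0.
have loc b : k b -> deg0_loc Bd f (frac_of b).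
  by move=> kb; apply/tofrac_deg0_loc/(subfield_grade0 gradB grade1 fieldk).
have [p Ap pt] := deg0_polyE (loc a ka); have [q Aq qt] := deg0_polyE (loc _ kai).
rewrite pt; apply/(fracs_of_id subA)/(transcendental_unit subA transc_t Ap Aq).
by rewrite -pt -qt -rmorphM mulrV // rmorph1.
Qed.

Section MinimalDegree.
Variables (e : nat) (g : Frac B).
Hypotheses (e0 : (0 < e)%N) (g0 : g != 0) (hg : homfrac Bd e%:Z g)
  (e_min : forall n, pos_homfrac_degree n -> (e <= n)%N).

Local Notation rational_tg := (rational_in (fracs_of A) t g).

Lemma homfrac_factor m z : z != 0 -> homfrac Bd m z ->
  exists q w, homfrac Bd 0 w /\ z = w * g ^ q.
Proof.
move=> z0 hz; pose q := (m %/ e%:Z)%Z; pose r := (m %% e%:Z)%Z.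
have e0' : e%:Z != 0 by lia.
have [r0 re] : 0 <= r /\ r < e%:Z by rewrite modz_ge0 // ltz_pmod //; lia.
pose w := z * g ^ (- q).
have hw : homfrac Bd r w.
  have := homfracM gradB hz (homfrac_expz gradB grade1 (- q) hg).
  by have -> : m + e%:Z * - q = r by rewrite {1}(divz_eq m e%:Z); ring.
have w0 : w != 0 by rewrite mulf_neq0 // expfz_neq0.
exists q, w; split; last by rewrite -mulrA -expfzDr // addNr expr0z mulr1.
have [<-//|rn0] := eqVneq r 0.
have : pos_homfrac_degree `|r|%N by split; [lia | exists w; rewrite // abszE ger0_norm].
by move/e_min; lia.
Qed.

Lemma rational_in_deg0_loc c : deg0_loc Bd f c -> rational_tg c.
Proof.
move/deg0_polyE => [p Ap ->]; rewrite -(eval2C t g p); apply: (rational_in_eval _ _ fieldK).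
by apply: (poly_overC (poly_over_subring subK)) => i; apply/(fracs_of_id subA)/Ap.
Qed.

Lemma rational_in_homfrac m z : homfrac Bd m z -> rational_tg z.
Proof.
move=> hz; have [->|z0] := eqVneq z 0; first exact/(rational_inK _ _ fieldK)/(subring0 subK).
have [q [w [/homfrac0_deg0_loc_div[c1 [c2 [c1_loc c2_loc _ ->]]] ->]]] := homfrac_factor z0 hz.
apply: (rational_inM fieldK); last exact/(rational_in_expz fieldK)/(rational_in_y _ _ fieldK).
apply: (rational_inM fieldK); first exact: rational_in_deg0_loc.
exact/(rational_inV fieldK)/rational_in_deg0_loc.
Qed.

Lemma rational_in_all z : rational_tg z.
Proof.
have tofrac_in b : rational_tg (frac_of b).
  case: gradB => _ _ /(_ b) [s [c [_ hc ->]]] _.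
  rewrite rmorph_sum; apply: (rational_in_sum fieldK) => n _.
  exact: rational_in_homfrac (homfrac_tofrac grade1 (hc n)).
have [a [b [_ ->]]] := frac_as_div z.
exact/(rational_inM fieldK)/(rational_inV fieldK).
Qed.

(* Writing [P(t, g) = \sum_i P_i(t) g^i], the [i]-th term is homogeneous of
   degree [i * e], so all terms vanish, and [t] is transcendental over [K]. *)
Lemma alg_indep P : coefs_in (fracs_of A) P -> eval2 P t g = 0 -> P = 0.
Proof.
move=> KP P0; apply/polyP => i; rewrite coef0.
have [lt_iP|/(nth_default 0)//] := ltnP i (size P).
have Pexp : eval2 P t g = \sum_(i < size P) (P`_i).[t] * g ^+ i.
  rewrite /eval2 (horner_coef P) horner_sum; apply: eq_bigr => j _.
  by rewrite hornerM horner_exp hornerC.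
have hom j : (j < size P)%N -> homfrac Bd (e%:Z *+ j) ((P`_j).[t] * g ^+ j).
  move=> _; have gj := homfracX gradB grade1 j hg.
  by have := homfracM gradB (poly_eval_homfrac (KP j)) gj; rewrite add0r.
have inj : injective (fun j => e%:Z *+ j) by apply: mulrIn; rewrite eqz_nat -lt0n.
rewrite Pexp in P0; have /eqP := homfrac_indep gradB grade1 hom (in2W inj) P0 lt_iP.
rewrite mulf_eq0 expf_eq0 (negPf g0) andbF orbF => /eqP.
exact: (fracs_transcendental subA transc_t (KP i)).
Qed.

End MinimalDegree.

End Cylinder.

Unset Implicit Arguments.

Theorem proposition1p3 (B : idomainType) (Bd : int -> B -> Prop) (k : B -> Prop) :
  is_Zgrading Bd -> subfield_set k ->
  (exists f : B, cylindrical Bd f) ->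
  exists K : Frac B -> Prop,
    [/\ subfield_set K,
        (forall a : B, k a -> K (frac_of a)) &
        purely_transc_deg2 K].
Proof.
move=> gradB fieldk [f [f0 [d [d0 hfd]] [A [t [subA A_deg0 t_deg0 deg0_polyE transc_t]]]]].
have deg0_poly c : deg0_loc Bd f c -> exists2 p, poly_over A p & c = p.[t].
  by move/deg0_polyE => [p [Ap ->]]; exists p.
have [e [[e0 [g g0 hg]] e_min]] := ex_minimal (pos_homfrac_degree_exists gradB f0 d0 hfd).
exists (fracs_of A); split.
- exact: fracs_subfield.
- exact: (subfield_in_fracs gradB f0 hfd subA deg0_poly transc_t fieldk).
- exists t, g; split.
  + exact: (alg_indep gradB f0 hfd subA A_deg0 t_deg0 transc_t e0 g0 hg).
  + exact: (rational_in_all gradB f0 d0 hfd subA deg0_poly e0 g0 hg e_min).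
Qed.
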